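(* For all $x\in\mathcal X$, $\frac{\Pr(Y^*=1\mid T^*=1,X^*=x)}{\Pr(Y^*=1\mid T^*=0,X^*=x)}=\Gamma(x,p_0)$ under Design 1, and $=\Gamma(x,0)$ under Design 2.
   Context: Population variables: $Y^*\in\{0,1\}$, $T^*\in\{0,1\}$, covariate vector $X^*$; $p_0:=\Pr(Y^*=1)$. The observed vector $(Y,T,X)$ arises from Bernoulli sampling: $Y\in\{0,1\}$ is drawn with known probability $h_0:=\Pr(Y=1)\in(0,1)$, and given $Y=y$, $(T,X)$ is drawn from a distribution $\mathcal P_y$. Densities (or mass functions) are denoted by $f$. Design 1 (case-control): for all $t\in\{0,1\}$, $x\in\mathcal X$, $y\in\{0,1\}$, $f_{X|Y}(x\mid y)=f_{X^*|Y^*}(x\mid y)$ and $\Pr(T=t\mid X=x,Y=y)=\Pr(T^*=t\mid X^*=x,Y^*=y)$. Design 2 (case-population): for all $t,x$, $f_{X|Y}(x\mid 0)=f_{X^*}(x)$, $\Pr(T=t\mid X=x,Y=0)=\Pr(T^*=t\mid X^*=x)$, $f_{X|Y}(x\mid 1)=f_{X^*|Y^*}(x\mid 1)$, $\Pr(T=t\mid X=x,Y=1)=\Pr(T^*=t\mid X^*=x,Y^*=1)$. Standing common support assumption: the support of $X^*$ and that of $X$ given $Y=y$ for $y=0,1$ coincide; call it $\mathcal X$. Let $\Pi(t\mid y,x):=\Pr(T=t\mid Y=y,X=x)$, assumed nonzero for all $t,y$. For $p\in[0,1]$, under Design 1, $r(x,p):=\frac{p(1-h_0)\Pr(Y=1\mid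 X=x)}{p(1-h_0)\Pr(Y=1\mid X=x)+h_0(1-p)\Pr(Y=0\mid X=x)}$, and under Design 2, $r(x,p):=\frac{p(1-h_0)}{h_0}\frac{\Pr(Y=1\mid X=x)}{\Pr(Y=0\mid X=x)}$. Define $\Gamma(x,p):=\frac{\Pi(1\mid 1,x)}{\Pi(0\mid 1,x)}\cdot\frac{\Pi(0\mid 0,x)+r(x,p)\{\Pi(0\mid 1,x)-\Pi(0\mid 0,x)\}}{\Pi(1\mid 0,x)+r(x,p)\{\Pi(1\mid 1,x)-\Pi(1\mid 0,x)\}}$. *)

From HB Require Import structures.
From mathcomp Require Import all_boot all_order all_algebra.
From mathcomp Require Import all_classical all_reals all_analysis.
Set Implicit Arguments. Unset Strict Implicit. Unset Printing Implicit Defensive.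
Import Order.TTheory GRing.Theory Num.Theory.
Local Open Scope ring_scope.

Definition is_density (d : measure_display) (X : measurableType d) (R : realType)
  (mu : {measure set X -> \bar R}) (f : X -> R) : Prop :=
  (forall x, 0 <= f x) /\ measurable_fun setT f /\
  (\int[mu]_x (f x)%:E = 1)%E.

Section Model.
Variables (X : Type) (R : realType).

Definition bern (q : R) (b : bool) : R := if b then q else 1 - q.

(* A law of a triple (Y,T,X) is parametrized by:
   p      = Pr(Y = 1),
   f y    = density of X given Y = y,
   e y x  = Pr(T = 1 | Y = y, X = x).
   Joint density of (Y,T,X) at (y,t,x): *)
Definition joint (p : R) (f e : bool -> X -> R) (y t : bool) (x : X) : R :=
  bern p y * f y x * bern (e y x) t.

Definition fX (p : R) (f : bool -> X -> R) (x : X) : R :=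
  bern p true * f true x + bern p false * f false x.

Definition suppX (p : R) (f : bool -> X -> R) : set X := [set x | 0 < fX p f x].

Definition PrY_X (p : R) (f : bool -> X -> R) (y : bool) (x : X) : R :=
  bern p y * f y x / fX p f x.

Definition PrT_X (p : R) (f e : bool -> X -> R) (t : bool) (x : X) : R :=
  (joint p f e true t x + joint p f e false t x) / fX p f x.

Definition PrY1_TX (p : R) (f e : bool -> X -> R) (t : bool) (x : X) : R :=
  joint p f e true t x / (joint p f e true t x + joint p f e false t x).

(* Sample quantities: h0, densities fs, es y x = Pi(1 | y, x). *)
Definition Pi (es : bool -> X -> R) (t y : bool) (x : X) : R := bern (es y x) t.

Definition r_cc (h0 : R) (fs : bool -> X -> R) (x : X) (p : R) : R :=
  p * (1 - h0) * PrY_X h0 fs true x /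
  (p * (1 - h0) * PrY_X h0 fs true x + h0 * (1 - p) * PrY_X h0 fs false x).

Definition r_cp (h0 : R) (fs : bool -> X -> R) (x : X) (p : R) : R :=
  p * (1 - h0) / h0 * (PrY_X h0 fs true x / PrY_X h0 fs false x).

Definition Gamma (r : X -> R -> R) (es : bool -> X -> R) (x : X) (p : R) : R :=
  Pi es true true x / Pi es false true x *
  ((Pi es false false x + r x p * (Pi es false true x - Pi es false false x)) /
   (Pi es true false x + r x p * (Pi es true true x - Pi es true false x))).

Definition design1 (p0 : R) (f e fs es : bool -> X -> R) : Prop :=
  (forall y x, fs y x = f y x) /\
  (forall t x y, Pi es t y x = bern (e y x) t).

Definition design2 (p0 : R) (f e fs es : bool -> X -> R) : Prop :=
  (forall x, fs false x = fX p0 f x) /\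
  (forall t x, x \in suppX p0 f -> Pi es t false x = PrT_X p0 f e t x) /\
  (forall x, fs true x = f true x) /\
  (forall t x, Pi es t true x = bern (e true x) t).

Definition common_support (p0 h0 : R) (f fs : bool -> X -> R) : Prop :=
  forall y x, (0 < fX p0 f x) <-> (0 < fs y x).

End Model.

From HB Require Import structures.
From mathcomp Require Import all_boot all_order all_algebra.
From mathcomp Require Import all_classical all_reals all_analysis.
From mathcomp Require Import ring.
Import Order.TTheory GRing.Theory Num.Theory.
Local Open Scope ring_scope.

(* By Bayes' rule the population odds ratio of Y given T at x equals
   Pr(T=1|Y=1,x)/Pr(T=0|Y=1,x) * Pr(T=0|x)/Pr(T=1|x).  Gamma(x,p) has the same
   shape once its numerator and denominator are read as the mixtures
   (1 - r) Pi(t|0,x) + r Pi(t|1,x), so it suffices that these mixtures are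
   Pr(T=t|x).  Under Design 1, r(x,p0) undoes the case-control change of prior
   from p0 to h0, i.e. it is Pr(Y=1|x), and the mixture is Pr(T=t|x) by total
   probability; under Design 2, r(x,0) = 0 and Pi(t|0,x) is Pr(T=t|x) by design. *)

Lemma divf_cancel_common (F : fieldType) (q b1 b0 P1 P0 : F) :
  q != 0 -> b0 != 0 -> (q * b1 / P1) / (q * b0 / P0) = b1 / b0 * (P0 / P1).
Proof.
move=> q_neq0 b0_neq0.
have [->|P0_neq0] := eqVneq P0 0; first by rewrite !(invr0, mulr0, mul0r).
have [->|P1_neq0] := eqVneq P1 0; first by rewrite !(invr0, mulr0, mul0r).
by field; rewrite P1_neq0 b0_neq0 P0_neq0 q_neq0.
Qed.

Section PopulationIdentities.
Variables (X : Type) (R : realType).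
Implicit Types (p : R) (f e es : bool -> X -> R) (x : X).

Lemma PrY_X_false p f x :
  fX p f x != 0 -> PrY_X p f false x = 1 - PrY_X p f true x.
Proof. by move=> fX_neq0; rewrite /PrY_X /fX /=; field. Qed.

Lemma PrY_X_true_neq0 p f x :
  p != 0 -> f true x != 0 -> fX p f x != 0 -> PrY_X p f true x != 0.
Proof. by move=> *; rewrite /PrY_X !mulf_neq0 ?invr_neq0. Qed.

Lemma PrT_X_total p f e t x :
  PrT_X p f e t x =
  PrY_X p f false x * bern (e false x) t + PrY_X p f true x * bern (e true x) t.
Proof. by rewrite /PrT_X /PrY_X /joint; ring. Qed.

Lemma PrY1_TX_bayes p f e t x : fX p f x != 0 ->
  PrY1_TX p f e t x = PrY_X p f true x * bern (e true x) t / PrT_X p f e t x.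
Proof.
move=> fX_neq0; rewrite /PrY1_TX /PrY_X /PrT_X.
set J := joint p f e true t x + _.
have [-> | J_neq0] := eqVneq J 0; first by rewrite mul0r !invr0 !mulr0.
by rewrite /joint; field; apply/andP.
Qed.

Lemma PrY1_TX_odds_ratio p f e x :
  fX p f x != 0 -> PrY_X p f true x != 0 -> bern (e true x) false != 0 ->
  PrY1_TX p f e true x / PrY1_TX p f e false x =
  bern (e true x) true / bern (e true x) false *
  (PrT_X p f e false x / PrT_X p f e true x).
Proof.
by move=> fX_neq0 q_neq0 b0_neq0; rewrite !PrY1_TX_bayes // divf_cancel_common.
Qed.

Lemma r_cc_reweight (h0 : R) f x p :
  h0 != 0 -> 1 - h0 != 0 -> fX h0 f x != 0 -> r_cc h0 f x p = PrY_X p f true x.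
Proof.
move=> h0_neq0 h0_neq1 fX_neq0; rewrite /r_cc /PrY_X [fX p f x]/fX /=.
pose c := h0 * (1 - h0) / fX h0 f x.
have c_neq0 : c != 0 by rewrite !mulf_neq0 ?invr_neq0.
transitivity (c * (p * f true x) / (c * (p * f true x + (1 - p) * f false x))).
  by congr (_ / _); rewrite /c; ring.
by rewrite -mulf_div divff // mul1r.
Qed.

Lemma GammaE r es x p :
  Gamma r es x p = Pi es true true x / Pi es false true x *
  (((1 - r x p) * Pi es false false x + r x p * Pi es false true x) /
   ((1 - r x p) * Pi es true false x + r x p * Pi es true true x)).
Proof. by rewrite /Gamma; congr (_ * (_ / _)); ring. Qed.

Lemma Gamma_odds_ratio p f e r es x p' :
  (forall t, Pi es t true x = bern (e true x) t) ->
  (forall t, (1 - r x p') * Pi es t false x + r x p' * Pi es t true x =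
             PrT_X p f e t x) ->
  Gamma r es x p' = bern (e true x) true / bern (e true x) false *
                    (PrT_X p f e false x / PrT_X p f e true x).
Proof. by move=> Pi1 mix; rewrite GammaE !mix !Pi1. Qed.

End PopulationIdentities.

Theorem lemmaA3 (d : measure_display) (X : measurableType d) (R : realType)
  (mu : {measure set X -> \bar R})
  (p0 : R) (f e : bool -> X -> R)
  (h0 : R) (fs es : bool -> X -> R)
  (hp0 : 0 < p0 < 1) (hh0 : 0 < h0 < 1)
  (hf : forall y, is_density mu (f y)) (hfs : forall y, is_density mu (fs y))
  (he : forall y x, 0 <= e y x <= 1) (hes : forall y x, 0 <= es y x <= 1)
  (hsupp : common_support p0 h0 f fs)
  (hPi : forall t y x, x \in suppX p0 f -> Pi es t y x != 0) :
  (design1 p0 f e fs es ->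
     forall x, x \in suppX p0 f ->
       PrY1_TX p0 f e true x / PrY1_TX p0 f e false x = Gamma (r_cc h0 fs) es x p0) /\
  (design2 p0 f e fs es ->
     forall x, x \in suppX p0 f ->
       PrY1_TX p0 f e true x / PrY1_TX p0 f e false x = Gamma (r_cp h0 fs) es x 0).
Proof.
case/andP: hp0 => p0_gt0 _; case/andP: hh0 => h0_gt0 h0_lt1.
have fX_neq0 x : x \in suppX p0 f -> fX p0 f x != 0 by rewrite inE => /lt0r_neq0.
have fs_gt0 y x : x \in suppX p0 f -> 0 < fs y x by rewrite inE => /hsupp.
have odds_ratioE x : x \in suppX p0 f -> f true x != 0 ->
    bern (e true x) false != 0 ->
    PrY1_TX p0 f e true x / PrY1_TX p0 f e false x =
    bern (e true x) true / bern (e true x) false *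
    (PrT_X p0 f e false x / PrT_X p0 f e true x).
  by move=> xs *; rewrite PrY1_TX_odds_ratio ?PrY_X_true_neq0 ?fX_neq0 ?(lt0r_neq0 p0_gt0).
split.
- move=> [fsE PiE] x xs.
  have fs_f : fs = f by apply/funext => y; apply/funext => z; exact: fsE.
  have fXh0_gt0 : 0 < fX h0 f x.
    by rewrite /fX /= -!fsE addr_gt0 ?mulr_gt0 ?subr_gt0 ?fs_gt0.
  have f1_neq0 : f true x != 0 by rewrite -fsE lt0r_neq0 ?fs_gt0.
  have b0_neq0 : bern (e true x) false != 0 by rewrite -PiE hPi.
  rewrite odds_ratioE //.
  symmetry; apply: Gamma_odds_ratio => t; first exact: PiE.
  rewrite fs_f r_cc_reweight ?lt0r_neq0 ?subr_gt0 // !PiE.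
  by rewrite PrT_X_total PrY_X_false ?fX_neq0.
- move=> [_ [Pi0E [fs1E Pi1E]]] x xs.
  have f1_neq0 : f true x != 0 by rewrite -fs1E lt0r_neq0 ?fs_gt0.
  have b0_neq0 : bern (e true x) false != 0 by rewrite -Pi1E hPi.
  rewrite odds_ratioE //.
  symmetry; apply: Gamma_odds_ratio => t; first exact: Pi1E.
  by rewrite /r_cp !mul0r subr0 mul1r addr0 Pi0E.
Qed.
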